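(* Let $m\ge 1$, $n=2m$, and let $\gamma(X_0,X_1,\ldots,X_{m-1})\in\mathbb{F}_2[X_0,\ldots,X_{m-1}]$ be a reduced polynomial of algebraic degree $d$. Define the Boolean function $f:\mathbb{F}_2^n\to\mathbb{F}_2$ by $$f(x_0,\ldots,x_{n-1})=\sum_{i=0}^{m-1}x_ix_{i+m}+\gamma(x_0+x_m,\,x_1+x_{m+1},\,\ldots,\,x_{m-1}+x_{2m-1}).$$ Then $f$ is a bent function. Moreover, if $\gamma$ is rotation symmetric (i.e. $\gamma(X_0,X_1,\ldots,X_{m-1})=\gamma(X_1,\ldots,X_{m-1},X_0)$), then $f$ is a rotation symmetric bent function on $\mathbb{F}_2^n$. Furthermore, if $d\ge 2$, then $f$ has algebraic degree $d$.
   Context: Every Boolean function $f:\mathbb{F}_2^n\to\mathbb{F}_2$ is identified with its algebraic normal form, a reduced polynomial $\sum_{u\in\mathbb{F}_2^n}c_u\prod_{i=0}^{n-1}x_i^{u_i}$ with $c_u\in\mathbb{F}_2$ (each variable appears with exponent at most 1); its algebraic degree is the largest number of variables in a monomial with nonzero coefficient. $f$ is rotation symmetric if $f(x_1,x_2,\ldots,x_{n-1},x_0)=f(x_0,x_1,\ldots,x_{n-1})$ for all $x\in\mathbb{F}_2^n$. The Walsh transform is $\mathcal{W}_f(b)=\sum_{x\in\mathbb{F}_2^n}(-1)^{f(x)+\sum_i x_ib_i}$, and $f$ is bent if $\mathcal{W}_f(b)=\pm 2^{n/2}$ for all $b\in\mathbb{F}_2^n$. *)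

From mathcomp Require Import all_boot all_order all_algebra.
Set Implicit Arguments. Unset Strict Implicit. Unset Printing Implicit Defensive.
Import GRing.Theory Num.Theory.

Definition vec (n : nat) := {ffun 'I_n -> bool}.

Definition boolfun (n : nat) := vec n -> bool.

(* A reduced polynomial in F_2[X_0..X_{n-1}] (algebraic normal form):
   coefficient c_S for each monomial prod_{i in S} X_i, S a subset of vars. *)
Definition anf (n : nat) := {ffun {set 'I_n} -> bool}.

Definition anf_eval n (c : anf n) (x : vec n) : bool :=
  \big[addb/false]_(S : {set 'I_n} | c S) [forall i in S, x i].

(* Algebraic degree: largest number of variables of a monomial with
   nonzero coefficient (0 for the zero polynomial). *)
Definition anf_deg n (c : anf n) : nat :=
  \max_(S : {set 'I_n} | c S) #|S|.

(* Every Boolean function has a unique ANF; f has algebraic degree d iff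
   its ANF has degree d. *)
Definition alg_degree_is n (f : boolfun n) (d : nat) : Prop :=
  exists c : anf n, (forall x, anf_eval c x = f x) /\ anf_deg c = d.

Definition rot n (x : vec n) : vec n := [ffun i => x (ordS i)].

Definition rotation_symmetric n (f : boolfun n) : Prop :=
  forall x, f (rot x) = f x.

Definition dotb n (x b : vec n) : bool := \big[addb/false]_(i < n) (x i && b i).

Definition walsh n (f : boolfun n) (b : vec n) : int :=
  (\sum_(x : vec n) (-1) ^+ (f x (+) dotb x b))%R.

Definition bent n (f : boolfun n) : Prop :=
  forall b, walsh f b = Posz (2 ^ n./2) \/ walsh f b = (- Posz (2 ^ n./2))%R.

(* The function of the theorem on F_2^(2m), with indices split as
   lshift m i = i and rshift m i = m + i (i < m). *)
Definition mm_gamma m (g : anf m) : boolfun (m + m) := fun x =>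
  (\big[addb/false]_(i < m) (x (lshift m i) && x (rshift m i)))
  (+) anf_eval g [ffun i => x (lshift m i) (+) x (rshift m i)].

(** The substitution x = (u, u + z) turns f(x) + <x, b> into
    gamma(z) + <z, b_R> + <u, 1 + z + b_L + b_R>, which is linear in u; summing
    over u kills every z except z = 1 + b_L + b_R, so W_f(b) = +-2^m.
    The cyclic shift maps each pair (x_i, x_(i+m)) to the pair of index i + 1,
    swapped at the wrap-around, and both x_i x_(i+m) and x_i + x_(i+m) are
    symmetric in the pair.  Expanding gamma(x_L + x_R) turns a monomial X^S into
    the distinct monomials x_J x_((S\J)+m), J a subset of S; for S of maximal
    degree the monomial x_S occurs exactly once and is not one of the quadratic
    terms x_i x_(i+m), so f has degree d when d >= 2. *)

From Pilot Require Import Defs.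
From mathcomp Require Import all_boot all_order all_algebra zify.
Set Implicit Arguments. Unset Strict Implicit. Unset Printing Implicit Defensive.
Import GRing.Theory Num.Theory.

Section Halves.
Variables m n : nat.

Definition lhalf (x : vec (m + n)) : vec m := [ffun i => x (lshift n i)].
Definition rhalf (x : vec (m + n)) : vec n := [ffun i => x (rshift m i)].

Definition join (u : vec m) (v : vec n) : vec (m + n) :=
  [ffun j => match split j with inl i => u i | inr i => v i end].

Lemma join_lshift u v i : join u v (lshift n i) = u i.
Proof.
by rewrite ffunE; case: split_ordP => k /eqP; rewrite eq_shift // => /eqP ->.
Qed.

Lemma join_rshift u v i : join u v (rshift m i) = v i.
Proof.
by rewrite ffunE; case: split_ordP => k /eqP; rewrite eq_shift // => /eqP ->.
Qed.

Lemma lhalf_join u v : lhalf (join u v) = u.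
Proof. by apply/ffunP => i; rewrite ffunE join_lshift. Qed.

Lemma rhalf_join u v : rhalf (join u v) = v.
Proof. by apply/ffunP => i; rewrite ffunE join_rshift. Qed.

Lemma join_halves x : join (lhalf x) (rhalf x) = x.
Proof.
by apply/ffunP => j; case: (split_ordP j) => k ->;
  rewrite ?join_lshift ?join_rshift ffunE.
Qed.

Lemma sum_vec_join (V : nmodType) (F : vec (m + n) -> V) :
  (\sum_x F x = \sum_u \sum_v F (join u v))%R.
Proof.
rewrite pair_big /= (reindex (fun p => join p.1 p.2)) //.
exists (fun x => (lhalf x, rhalf x)).
  by move=> [u v] _ /=; rewrite lhalf_join rhalf_join.
by move=> x _ /=; rewrite join_halves.
Qed.

Lemma dotb_join u v b :
  dotb (join u v) b = dotb u (lhalf b) (+) dotb v (rhalf b).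
Proof.
rewrite /dotb big_split_ord /=.
by congr addb; apply: eq_bigr => i _; rewrite ?join_lshift ?join_rshift ffunE.
Qed.

Definition join_set (J : {set 'I_m}) (K : {set 'I_n}) : {set 'I_(m + n)} :=
  @lshift m n @: J :|: @rshift m n @: K.

Lemma forall_join_set (x : vec (m + n)) J K :
  [forall j in join_set J K, x j] =
  [forall i in J, lhalf x i] && [forall i in K, rhalf x i].
Proof.
apply/forallP/andP => [x_JK | [xJ xK] j].
  split; apply/forallP => i; apply/implyP => i_in; rewrite ffunE;
    by apply: (implyP (x_JK _)); rewrite inE imset_f ?orbT.
apply/implyP; rewrite inE => /orP [] /imsetP [i i_in ->].
  by move: (implyP (forallP xJ i) i_in); rewrite ffunE.
by move: (implyP (forallP xK i) i_in); rewrite ffunE.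
Qed.

Lemma card_join_set J K : #|join_set J K| <= #|J| + #|K|.
Proof.
by apply: leq_trans (leq_card_setU _ _) _; apply: leq_add; apply: leq_imset_card.
Qed.

Lemma join_set_eq_lshift J K (J0 : {set 'I_m}) :
  join_set J K = @lshift m n @: J0 -> J = J0 /\ K = set0.
Proof.
move=> JK_J0; have K0 : K = set0.
  apply/setP => i; rewrite inE; apply/negbTE/negP => iK.
  have : rshift m i \in join_set J K by rewrite inE imset_f ?orbT.
  by rewrite JK_J0 => /imsetP [k _ /eqP]; rewrite eq_rlshift.
split=> //; move: JK_J0; rewrite /join_set K0 imset0 setU0.
exact/imset_inj/lshift_inj.
Qed.

End Halves.

Definition vadd n (u v : vec n) : vec n := [ffun i => u i (+) v i].

Lemma vaddK n (u : vec n) : involutive (vadd u).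
Proof. by move=> v; apply/ffunP => i; rewrite !ffunE addKb. Qed.

Lemma vadd_inj n (u : vec n) : injective (vadd u).
Proof. exact: can_inj (vaddK u). Qed.

Lemma signr_big_addb (R : pzRingType) I (r : seq I) (P : pred I) (F : I -> bool) :
  ((-1) ^+ (\big[addb/false]_(i <- r | P i) F i) =
   \prod_(i <- r | P i) (-1) ^+ (F i) :> R)%R.
Proof. exact: (big_morph (fun b : bool => (-1) ^+ b : R)%R (@signr_addb R)). Qed.

Lemma sum_sign_dotb (R : comPzRingType) n (w : vec n) :
  (\sum_(u : vec n) (-1) ^+ dotb u w =
   if w == [ffun => false] then 2 ^+ n else 0 :> R)%R.
Proof.
under eq_bigr do rewrite signr_big_addb.
rewrite -(bigA_distr_bigA (fun i t => (-1) ^+ (t && w i) : R)%R) /=.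
under eq_bigr do rewrite big_bool /=.
case: eqP => [-> | nz].
  by under eq_bigr do rewrite ffunE; rewrite prodr_const card_ord.
have [i wi] : exists i, w i.
  apply/existsP; apply: contra_notT nz => /existsPn w0.
  by apply/ffunP => i; rewrite ffunE; apply/negbTE.
by rewrite (bigD1 i) //= wi expr1 addNr mul0r.
Qed.

Section AlgebraicNormalForm.
Variable n : nat.
Implicit Types (c : anf n) (x : vec n).

Definition anf_xor c1 c2 : anf n := [ffun S => c1 S (+) c2 S].

Definition anf_of_monomials (I : finType) (P : pred I) (M : I -> {set 'I_n}) : anf n :=
  [ffun S => \big[addb/false]_(i | P i) (S == M i)].

Lemma anf_eval_mkcond c x :
  anf_eval c x = \big[addb/false]_S (c S && [forall i in S, x i]).
Proof. by rewrite /anf_eval big_mkcond; apply: eq_bigr => S _; case: (c S). Qed.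

Lemma anf_eval_xor c1 c2 x :
  anf_eval (anf_xor c1 c2) x = anf_eval c1 x (+) anf_eval c2 x.
Proof.
rewrite !anf_eval_mkcond -big_split; apply: eq_bigr => S _.
by rewrite ffunE andb_addl.
Qed.

Lemma anf_eval_monomials (I : finType) (P : pred I) M x :
  anf_eval (anf_of_monomials P M) x = \big[addb/false]_(i | P i) [forall j in M i, x j].
Proof.
rewrite anf_eval_mkcond.
under eq_bigr do rewrite ffunE big_distrl.
rewrite exchange_big; apply: eq_bigr => i _.
by rewrite (bigD1 (M i)) //= eqxx big1 ?addbF // => S /negbTE ->.
Qed.

Lemma big_addb_witness (I : finType) (P : pred I) (F : I -> bool) :
  \big[addb/false]_(i | P i) F i -> exists2 i, P i & F i.
Proof.
case: (pickP (fun i => P i && F i)) => [i /andP [] | noPF]; first by exists i.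
by rewrite big1 // => i Pi; move: (noPF i); rewrite Pi.
Qed.

Lemma anf_deg_xor c1 c2 : anf_deg (anf_xor c1 c2) <= maxn (anf_deg c1) (anf_deg c2).
Proof.
apply/bigmax_leqP => S; rewrite ffunE leq_max.
have deg_ge c : c S -> #|S| <= anf_deg c by apply: leq_bigmax_cond.
case c1S: (c1 S) => /= c2S; first by rewrite deg_ge.
by rewrite (deg_ge c2) ?orbT.
Qed.

Lemma anf_deg_monomials (I : finType) (P : pred I) M :
  anf_deg (anf_of_monomials P M) <= \max_(i | P i) #|M i|.
Proof.
apply/bigmax_leqP => S; rewrite ffunE => /big_addb_witness [i Pi /eqP ->].
exact: leq_bigmax_cond.
Qed.

Lemma anf_deg_witness c : 0 < anf_deg c -> exists2 S, c S & #|S| = anf_deg c.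
Proof.
move=> deg_gt0.
have [|S cS deg_S] := @eq_bigmax_cond _ [pred S | c S] (fun S => #|S|).
  rewrite lt0n; apply: contraTneq deg_gt0 => /card0_eq c0.
  by rewrite /anf_deg big_pred0.
by exists S.
Qed.

Lemma forall_addb_expand (S : {set 'I_n}) (a b : 'I_n -> bool) :
  [forall i in S, a i (+) b i] =
  \big[addb/false]_(J : {set 'I_n} | J \subset S)
     ([forall i in J, a i] && [forall i in S :\: J, b i]).
Proof.
have -> : [forall i in S, a i (+) b i] = \big[andb/true]_i
    ((if i \in S then a i else false) (+) (if i \in S then b i else true)).
  by rewrite -big_andE big_mkcond; apply: eq_bigr => i _; case: (i \in S).
rewrite bigA_distr [RHS]big_mkcond; apply: eq_bigr => J _.
case: ifP => [sJS | /negbT /subsetPn [i iJ iNS]]; last first.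
  by rewrite (bigD1 i) //= iJ (negbTE iNS).
rewrite big_andE; apply/forallP/andP => [all_i | [aJ bSJ] i].
  split; apply/forallP => i; apply/implyP => i_in; move: (all_i i).
    by rewrite i_in (subsetP sJS i i_in).
  by move: i_in; rewrite inE => /andP [/negbTE -> ->].
case: (boolP (i \in J)) => iJ.
  by rewrite (subsetP sJS i iJ) (implyP (forallP aJ i)).
case: (boolP (i \in S)) => // iS.
by apply: (implyP (forallP bSJ i)); rewrite inE iJ iS.
Qed.

End AlgebraicNormalForm.

Lemma mm_gamma_halves m (g : anf m) x :
  mm_gamma g x = dotb (lhalf x) (rhalf x) (+) anf_eval g (vadd (lhalf x) (rhalf x)).
Proof.
rewrite /mm_gamma /dotb; congr addb.
  by apply: eq_bigr => i _; rewrite !ffunE.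
by congr anf_eval; apply/ffunP => i; rewrite !ffunE.
Qed.

Section MaioranaMcFarland.
Variables (m : nat) (g : anf m).

Lemma mm_gamma_join_vadd u z b :
  mm_gamma g (join u (vadd u z)) (+) dotb (join u (vadd u z)) b =
  (anf_eval g z (+) dotb z (rhalf b))
  (+) dotb u [ffun i => ~~ (z i (+) lhalf b i (+) rhalf b i)].
Proof.
rewrite mm_gamma_halves dotb_join lhalf_join rhalf_join vaddK.
have dotb_terms :
    dotb u (vadd u z) (+) (dotb u (lhalf b) (+) dotb (vadd u z) (rhalf b)) =
    dotb z (rhalf b) (+) dotb u [ffun i => ~~ (z i (+) lhalf b i (+) rhalf b i)].
  rewrite /dotb -!big_split; apply: eq_bigr => i _; rewrite !ffunE.
  by case: (u i); case: (z i); case: (b (lshift m i)); case: (b (rshift m i)).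
by rewrite (addbC (dotb u _)) -addbA dotb_terms addbA.
Qed.

Lemma walsh_mm_gamma b :
  let z0 : vec m := [ffun i => ~~ (lhalf b i (+) rhalf b i)] in
  walsh (mm_gamma g) b =
  ((-1) ^+ (anf_eval g z0 (+) dotb z0 (rhalf b)) * 2 ^+ m)%R.
Proof.
move=> z0; rewrite /walsh sum_vec_join.
under eq_bigr => u _ do rewrite (reindex_inj (@vadd_inj _ u)) /=.
under eq_bigr => u _ do under eq_bigr => z _ do
  rewrite mm_gamma_join_vadd signr_addb.
rewrite exchange_big /=.
under eq_bigr => z _ do rewrite -mulr_sumr sum_sign_dotb.
have dual_eq0 (z : vec m) :
    ([ffun i => ~~ (z i (+) lhalf b i (+) rhalf b i)] == [ffun => false]) = (z == z0).
  apply/eqP/eqP => [/ffunP z_dual | ->]; apply/ffunP => i.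
    move: (z_dual i); rewrite !ffunE.
    by case: (z i); case: (b (lshift m i)); case: (b (rshift m i)).
  by rewrite !ffunE; case: (b (lshift m i)); case: (b (rshift m i)).
rewrite (bigD1 z0) //= dual_eq0 eqxx big1 ?addr0 // => z.
by rewrite dual_eq0 => /negbTE ->; rewrite mulr0.
Qed.

Lemma bent_mm_gamma : bent (mm_gamma g).
Proof.
move=> b; rewrite walsh_mm_gamma -natz natrX addnn doubleK.
by case: (_ (+) _); [right; rewrite expr1 mulN1r | left; rewrite expr0 mul1r].
Qed.

End MaioranaMcFarland.

Lemma ordS_shift m (i : 'I_m) :
  (ordS (lshift m i) = lshift m (ordS i) /\ ordS (rshift m i) = rshift m (ordS i)) \/
  (ordS (lshift m i) = rshift m (ordS i) /\ ordS (rshift m i) = lshift m (ordS i)).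
Proof.
have lt_i_m := ltn_ord i.
case: (ltnP i.+1 m) => [lt_Si_m | le_m_Si]; [left | right]; split; apply/val_inj => /=.
- by rewrite !modn_small //; lia.
- by rewrite !modn_small //; lia.
- have -> : i.+1 = m by lia.
  by rewrite modnn addn0 modn_small //; lia.
- have -> : i.+1 = m by lia.
  by rewrite modnn -addnS (_ : i.+1 = m) ?modnn //; lia.
Qed.

Section Rotation.
Variable m : nat.

Lemma halves_rot (x : vec (m + m)) i :
  (lhalf (Defs.rot x) i, rhalf (Defs.rot x) i) = (lhalf x (ordS i), rhalf x (ordS i)) \/
  (lhalf (Defs.rot x) i, rhalf (Defs.rot x) i) = (rhalf x (ordS i), lhalf x (ordS i)).
Proof. by rewrite !ffunE; case: (ordS_shift i) => -[-> ->]; [left | right]. Qed.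

Lemma dotb_halves_rot (x : vec (m + m)) :
  dotb (lhalf (Defs.rot x)) (rhalf (Defs.rot x)) = dotb (lhalf x) (rhalf x).
Proof.
rewrite /dotb [RHS](reindex_inj (@ordS_inj m)); apply: eq_bigr => i _.
by case: (halves_rot x i) => -[-> ->] //; apply: andbC.
Qed.

Lemma vadd_halves_rot (x : vec (m + m)) :
  vadd (lhalf (Defs.rot x)) (rhalf (Defs.rot x)) = Defs.rot (vadd (lhalf x) (rhalf x)).
Proof.
apply/ffunP => i; rewrite [LHS]ffunE [RHS]ffunE [in RHS]ffunE.
by case: (halves_rot x i) => -[-> ->] //; apply: addbC.
Qed.

Lemma rotation_symmetric_mm_gamma (g : anf m) :
  rotation_symmetric (anf_eval g) -> rotation_symmetric (mm_gamma g).
Proof.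
by move=> g_rot x; rewrite !mm_gamma_halves dotb_halves_rot vadd_halves_rot g_rot.
Qed.

End Rotation.

Section MaioranaMcFarlandDegree.
Variables (m : nat) (g : anf m).

Definition mm_anf : anf (m + m) :=
  anf_xor (anf_of_monomials predT (fun i : 'I_m => join_set [set i] [set i]))
    (anf_of_monomials (fun p : {set 'I_m} * {set 'I_m} => g p.1 && (p.2 \subset p.1))
       (fun p => join_set p.2 (p.1 :\: p.2))).

Lemma anf_eval_mm_anf x : anf_eval mm_anf x = mm_gamma g x.
Proof.
rewrite anf_eval_xor !anf_eval_monomials mm_gamma_halves; congr addb.
  apply: eq_bigr => i _; rewrite forall_join_set.
  have forall_set1 (y : vec m) : [forall j in [set i], y j] = y i.
    apply/forallP/idP => [/(_ i) | yi j]; first by rewrite inE eqxx.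
    by apply/implyP => /set1P ->.
  by rewrite !forall_set1.
have expand_vadd (S : {set 'I_m}) : [forall i in S, vadd (lhalf x) (rhalf x) i] =
    \big[addb/false]_(J : {set 'I_m} | J \subset S)
      ([forall i in J, lhalf x i] && [forall i in S :\: J, rhalf x i]).
  by rewrite -forall_addb_expand; apply: eq_forallb => i; rewrite ffunE.
rewrite [RHS]/anf_eval; under [RHS]eq_bigr do rewrite expand_vadd.
rewrite pair_big_dep /=; apply: eq_bigr => p _.
by rewrite forall_join_set.
Qed.

Lemma anf_deg_mm_anf : 2 <= anf_deg g -> anf_deg mm_anf = anf_deg g.
Proof.
move=> deg_ge2; apply/eqP; rewrite eqn_leq; apply/andP; split.
  apply: leq_trans (anf_deg_xor _ _) _; rewrite geq_max.
  apply/andP; split; apply: leq_trans (anf_deg_monomials _ _) _.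
    apply/bigmax_leqP => i _; apply: leq_trans (card_join_set _ _) _.
    by rewrite !cards1.
  apply/bigmax_leqP => -[S J] /= /andP [gS sJS].
  apply: leq_trans (card_join_set _ _) _.
  by rewrite -{1}(setIidPr sJS) cardsID; apply: leq_bigmax_cond.
have [S0 gS0 <-] := anf_deg_witness (ltnW deg_ge2).
rewrite -(card_imset _ (@lshift_inj m m)); apply: leq_bigmax_cond.
rewrite !ffunE big1 => [|i _] /=; last first.
  apply/negbTE/eqP => /esym/join_set_eq_lshift [_ /setP /(_ i)].
  by rewrite !inE eqxx.
rewrite (bigD1 (S0, S0)) /=; last by rewrite gS0 subxx.
rewrite /join_set setDv imset0 setU0 eqxx big1 //.
move=> -[S J] /= /andP [/andP [_ sJS] neq_S0].
apply/negbTE/eqP => /esym/join_set_eq_lshift [J_S0 /eqP]; rewrite setD_eq0 => sSJ.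
suff S_S0 : S = S0 by rewrite S_S0 J_S0 eqxx in neq_S0.
by apply/eqP; rewrite eqEsubset -J_S0 sSJ.
Qed.

End MaioranaMcFarlandDegree.

Theorem theorem1 (m d : nat) (g : anf m) :
  1 <= m -> anf_deg g = d ->
  bent (mm_gamma g) /\
  (rotation_symmetric (anf_eval g) ->
     rotation_symmetric (mm_gamma g) /\ bent (mm_gamma g)) /\
  (2 <= d -> alg_degree_is (mm_gamma g) d).
Proof.
move=> _ deg_g; split; first exact: bent_mm_gamma.
split=> [g_rot | deg_ge2].
  by split; [exact: rotation_symmetric_mm_gamma | exact: bent_mm_gamma].
exists (mm_anf g); split; first exact: anf_eval_mm_anf.
by rewrite -deg_g anf_deg_mm_anf // deg_g.
Qed.
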